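(* Let $E\subseteq\mathbb{R}$, let $f:E\to\mathbb{R}$ be Abel continuous on $E$, and let $F\subseteq E$ be Abel sequentially compact. Then $f(F)$ is Abel sequentially compact.
   Context: A sequence $(p_n)_{n\ge0}$ is Abel convergent to $\ell$ if $\sum_{k=0}^{\infty}p_k x^k$ converges for every $0\le x<1$ and $\lim_{x\to 1^-}(1-x)\sum_{k=0}^{\infty}p_k x^k=\ell$. $f$ is Abel continuous on $E$ if for every sequence $(p_n)$ in $E$ Abel convergent to some $\ell\in E$, $(f(p_n))$ is Abel convergent to $f(\ell)$. A subset $F\subseteq\mathbb{R}$ is Abel sequentially compact if every sequence of points of $F$ has a subsequence $(r_k)$ that is Abel convergent to a limit belonging to $F$. *)

From Stdlib Require Import Reals.
Open Scope R_scope.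

Definition abel_convergent (p : nat -> R) (l : R) : Prop :=
  exists A : R -> R,
    (forall x, 0 <= x < 1 -> infinite_sum (fun k => p k * x ^ k) (A x)) /\
    (forall eps, eps > 0 -> exists delta, delta > 0 /\
       forall x, 0 <= x < 1 -> 1 - x < delta -> Rabs ((1 - x) * A x - l) < eps).

Definition abel_continuous (E : R -> Prop) (f : R -> R) : Prop :=
  forall (p : nat -> R) (l : R),
    (forall n, E (p n)) -> E l -> abel_convergent p l ->
    abel_convergent (fun n => f (p n)) (f l).

Definition abel_seq_compact (F : R -> Prop) : Prop :=
  forall p : nat -> R, (forall n, F (p n)) ->
    exists (phi : nat -> nat) (l : R),
      (forall n, (phi n < phi (S n))%nat) /\ F l /\
      abel_convergent (fun k => p (phi k)) l.

Definition image (f : R -> R) (F : R -> Prop) : R -> Prop :=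
  fun y => exists x, F x /\ y = f x.

From Stdlib Require Import Reals ClassicalChoice.
Open Scope R_scope.

(* Pull a sequence in f(F) back to a sequence in F by choice; an Abel convergent
   subsequence of it is mapped by f to an Abel convergent subsequence of the
   original one, and its limit stays in f(F). *)

Lemma abel_convergent_ext (p q : nat -> R) (l : R) :
  (forall n, p n = q n) -> abel_convergent p l -> abel_convergent q l.
Proof.
  intros Hpq [A [HA Hlim]].
  exists A; split; [|exact Hlim].
  intros x Hx eps Heps.
  destruct (HA x Hx eps Heps) as [N HN].
  exists N; intros n Hn.
  rewrite <- (sum_eq (fun k => p k * x ^ k)) by (intros k _; rewrite Hpq; reflexivity).
  exact (HN n Hn).
Qed.

Lemma image_seq_lift (f : R -> R) (F : R -> Prop) (q : nat -> R) :
  (forall n, image f F (q n)) ->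
  exists p : nat -> R, forall n, F (p n) /\ q n = f (p n).
Proof. intros Hq; exact (choice (fun n x => F x /\ q n = f x) Hq). Qed.

Theorem theorem11 (E F : R -> Prop) (f : R -> R) :
  abel_continuous E f ->
  (forall x, F x -> E x) ->
  abel_seq_compact F ->
  abel_seq_compact (image f F).
Proof.
  intros Hf HFE HF q Hq.
  destruct (image_seq_lift f F q Hq) as [p Hp].
  destruct (HF p (fun n => proj1 (Hp n))) as [phi [l [Hphi [Hl Hconv]]]].
  exists phi, (f l); split; [exact Hphi|]; split.
  - exists l; split; [exact Hl | reflexivity].
  - apply (abel_convergent_ext (fun k => f (p (phi k)))).
    + intros k; symmetry; exact (proj2 (Hp (phi k))).
    + apply Hf; [intros k; apply HFE, Hp | apply HFE, Hl | exact Hconv].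
Qed.
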